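(* Let $A=M_{12}$ acting primitively on $12$ points, and for $r\geq 1$ let $G=A\wr C_r$, where $C_r$ is a cyclic group of order $r$ acting regularly on $r$ coordinates, with $G$ acting in product action on $n=12^r$ points. Then for all sufficiently large $r$, $k(G)>n^{1.08}$.
   Context: $k(X)$ denotes the number of conjugacy classes of a finite group $X$. Product action: $A\wr C_r=A^r\rtimes C_r$ acts on $\Delta^r$ ($|\Delta|=12$), with $A^r$ acting coordinatewise and $C_r$ permuting coordinates. *)

From mathcomp Require Import all_boot all_fingroup.
Set Implicit Arguments. Unset Strict Implicit. Unset Printing Implicit Defensive.
Local Open Scope group_scope.

Definition pt (k : nat) : 'I_12 := inord k.
Definition tp (x y : nat) : {perm 'I_12} := tperm (pt x) (pt y).
(* the 3-cycle x -> y -> z -> x  (MathComp: (s * t) u = t (s u)) *)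
Definition cyc3 (x y z : nat) : {perm 'I_12} := tp y z * tp x y.

(* ATLAS standard generators of M12 in its natural action on 12 points,
   shifted to 0-based labels:
   a = (1,4)(3,10)(5,11)(6,12),  b = (1,8,9)(2,3,4)(5,12,11)(6,10,7). *)
Definition m12a : {perm 'I_12} := tp 0 3 * tp 2 9 * tp 4 10 * tp 5 11.
Definition m12b : {perm 'I_12} :=
  cyc3 0 7 8 * cyc3 1 2 3 * cyc3 4 11 10 * cyc3 5 9 6.

Definition M12 : {group {perm 'I_12}} := <<[set m12a; m12b]>>%G.

Definition Omega (r : nat) := {ffun 'I_r -> 'I_12}.

Definition base_fun r (g : {ffun 'I_r -> {perm 'I_12}}) (x : Omega r) : Omega r :=
  [ffun i => g i (x i)].
Lemma base_fun_inj r g : injective (@base_fun r g).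
Proof.
move=> x y /ffunP H; apply/ffunP => i; have := H i; rewrite !ffunE.
exact: perm_inj.
Qed.
Definition basep r g : {perm Omega r} := perm (@base_fun_inj r g).

Definition shift_fun r (x : Omega r) : Omega r := [ffun i => x (ordS i)].
Lemma shift_fun_inj r : injective (@shift_fun r).
Proof.
move=> x y /ffunP H; apply/ffunP => i; have := H (ord_pred i); rewrite !ffunE.
by rewrite ord_predK.
Qed.
Definition shiftp r : {perm Omega r} := perm (@shift_fun_inj r).

Definition base_group r : {set {perm Omega r}} :=
  [set basep g | g : {ffun 'I_r -> {perm 'I_12}} & [forall i, g i \in M12]].
Definition wreath_M12 (r : nat) : {group {perm Omega r}} :=
  <<base_group r :|: [set shiftp r]>>%G.

Definition kcl (gT : finGroupType) (X : {set gT}) : nat := #|classes X|.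

From mathcomp Require Import all_boot all_fingroup.
From mathcomp Require Import zify.
Set Implicit Arguments. Unset Strict Implicit. Unset Printing Implicit Defensive.

(* M12 has 15 conjugacy classes.  Choosing one representative in each, the
   base group of G contains 15^r elements whose coordinates are all
   representatives.  Conjugation by a base element conjugates each coordinate
   inside M12 and conjugation by the shift rotates the coordinates, so two
   such elements are conjugate in G only if their coordinate sequences are
   rotations of each other: every class of G contains at most r of them, and
   15^r <= r k(G).  Since 12^1.08 < 14.7 < 15, this beats n^1.08 = 12^(1.08 r)
   for large r.  The classes of M12 are told apart by fixed-point counts of
   powers and by a count of hexads of the Steiner system S(5,6,12), which M12
   preserves; these finite facts are checked by computation. *)

Lemma exp_dominates_poly r : 250 <= r -> 5 ^ r * r ^ 25 < 9 ^ r.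
Proof.
elim: r => [//|r IH].
rewrite leq_eqVlt => /orP[/eqP <- | r_ge]; first lia.
have {}IH := IH r_ge.
(* ((r + 1) / r)^25 <= (51/50)^25 < 9/5 *)
have step : 5 * r.+1 ^ 25 <= 9 * r ^ 25.
  have : (50 * r.+1) ^ 25 <= (51 * r) ^ 25 by rewrite leq_exp2r //; lia.
  by rewrite !expnMn; move: (r.+1 ^ 25) (r ^ 25) => X Y; lia.
rewrite (expnS 5 r) (expnS 9 r).
move: (5 ^ r) (9 ^ r) (r.+1 ^ 25) (r ^ 25) IH step => P Q X Y; nia.
Qed.

(* 12^27 / 15^25 < 5/9, and 9^r / 5^r absorbs the factor r^25. *)
Lemma pow_bound_of_count r k : 250 <= r -> 15 ^ r <= k * r -> (12 ^ r) ^ 27 < k ^ 25.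
Proof.
move=> r_ge count; have dom := exp_dominates_poly r_ge.
have r_gt0 : 0 < r by lia.
have {}count : (15 ^ 25) ^ r <= k ^ 25 * r ^ 25.
  by rewrite -expnMn -expnM (mulnC 25 r) expnM leq_exp2r.
rewrite -expnM (mulnC r 27) expnM.
(* Abstracting 12^27 and 15^25 keeps them from being evaluated in unary. *)
have : 12 ^ 27 * 9 <= 15 ^ 25 * 5 by lia.
have : 0 < 12 ^ 27 by rewrite expn_gt0.
move: (12 ^ 27) (15 ^ 25) count => a b count a_gt0 ratio.
have {}a_gt0 : 0 < a ^ r by rewrite expn_gt0 a_gt0.
have {}ratio : a ^ r * 9 ^ r <= b ^ r * 5 ^ r by rewrite -!expnMn leq_exp2r.
have PR_gt0 : 0 < 5 ^ r * r ^ 25 by rewrite muln_gt0 !expn_gt0 r_gt0.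
rewrite -(ltn_pmul2r PR_gt0).
move: (a ^ r) (b ^ r) (5 ^ r) (9 ^ r) (r ^ 25) (k ^ 25) a_gt0 dom count ratio PR_gt0.
move=> A B P Q R K; nia.
Qed.

Lemma card_le_fibers (aT rT : finType) (f : aT -> rT) (D : {set rT}) b :
  (forall x, f x \in D) -> (forall x, #|[set y | f y == f x]| <= b) ->
  #|aT| <= #|D| * b.
Proof.
move=> fD fibers; rewrite -[#|aT|]sum1_card (partition_big f (fun y => y \in D)) //=.
rewrite -sum_nat_const.
apply: leq_sum => y _; rewrite sum1dep_card.
have [-> | [x]] := set_0Vmem [set x | f x == y]; first by rewrite cards0.
by rewrite inE => /eqP <-; exact: fibers.
Qed.

Section WreathProduct.

Variables (A : {group {perm 'I_12}}) (r : nat).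
Hypothesis r_gt0 : 0 < r.

Local Open Scope group_scope.

Local Notation fT := {ffun 'I_r -> {perm 'I_12}}.

Definition wreath : {group {perm Omega r}} :=
  <<[set basep g | g : fT & [forall i, g i \in A]] :|: [set shiftp r]>>%G.

Definition rotc (T : Type) (k : nat) (h : {ffun 'I_r -> T}) : {ffun 'I_r -> T} :=
  [ffun i => h (iter k (@ordS r) i)].

Lemma rotc_mod T k (h : {ffun 'I_r -> T}) : rotc k h = rotc (k %% r) h.
Proof.
have iterE j (i : 'I_r) : val (iter j (@ordS r) i) = (i + j) %% r.
  elim: j => [|j IHj] /=; first by rewrite addn0 modn_small.
  by rewrite IHj -addn1 modnDml addn1 addnS.
apply/ffunP => i; rewrite !ffunE; congr (h _); apply: val_inj.
by rewrite !iterE modnDmr.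
Qed.

Lemma rotcS T k (h : {ffun 'I_r -> T}) : rotc 1 (rotc k h) = rotc k.+1 h.
Proof. by apply/ffunP => i; rewrite !ffunE [in RHS]iterSr. Qed.

Lemma shiftpE u : shiftp r u = [ffun i => u (ordS i)].
Proof. by rewrite permE. Qed.

Lemma basepE (g : fT) u : basep g u = [ffun i => g i (u i)].
Proof. by rewrite permE. Qed.

Lemma basep_inj : injective (@basep r).
Proof.
move=> g g' eq_gg'; apply/ffunP => i; apply/permP => p.
have := congr1 (fun y : {perm Omega r} => y [ffun=> p] i) eq_gg'.
by rewrite /= !basepE !ffunE.
Qed.

Lemma basepM (g h : fT) : basep g * basep h = basep [ffun i => g i * h i].
Proof. by apply/permP => u; apply/ffunP => i; rewrite permM !basepE !ffunE permM. Qed.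

Lemma basepJ (g h : fT) : basep g ^ basep h = basep [ffun i => g i ^ h i].
Proof.
apply: (mulgI (basep h)); rewrite -conjgC !basepM; congr basep.
by apply/ffunP => i; rewrite !ffunE conjgC.
Qed.

Lemma basep_shiftJ (g : fT) : basep g ^ shiftp r = basep (rotc 1 g).
Proof.
apply: (mulgI (shiftp r)); rewrite -conjgC; apply/permP => u; apply/ffunP => i.
by rewrite !permM shiftpE !basepE shiftpE !ffunE.
Qed.

Lemma basep_wreath (g : fT) : (forall i, g i \in A) -> basep g \in wreath.
Proof.
move=> gA; rewrite mem_gen // !inE; apply/orP; left.
by apply/imsetP; exists g; rewrite // inE; apply/forallP.
Qed.

Definition conj_rotations (h : fT) : {set {perm Omega r}} :=
  @basep r @: [set g : fT | [exists k : 'I_r, [forall i, g i \in rotc k h i ^: A]]].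

Lemma conj_rotations_norm h : wreath \subset 'N(conj_rotations h).
Proof.
rewrite gen_subG; apply/subsetP => a a_gen; rewrite inE.
apply/subsetP => _ /imsetP[_ /imsetP[g + ->] ->]; rewrite inE => /existsP[k /forallP gk].
case/setUP: a_gen => [/imsetP[c + ->] | /set1P ->].
  rewrite inE => /forallP cA; rewrite basepJ imset_f // inE; apply/existsP; exists k.
  by apply/forallP => i; rewrite ffunE (class_trans _ (gk i)) // memJ_class.
rewrite basep_shiftJ imset_f // inE; apply/existsP; exists (ordS k); apply/forallP => i.
have -> : rotc (ordS k) h = rotc 1 (rotc k h) by rewrite rotcS [RHS]rotc_mod.
by move: (gk (ordS i)); rewrite !ffunE.
Qed.

Lemma basep_class_rot (g h : fT) :
  basep g \in basep h ^: wreath -> exists k : 'I_r, forall i, g i \in rotc k h i ^: A.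
Proof.
have hh : basep h \in conj_rotations h.
  rewrite imset_f // inE; apply/existsP; exists (Ordinal r_gt0); apply/forallP => i.
  by rewrite ffunE class_refl.
case/imsetP=> a /(subsetP (conj_rotations_norm h)) nha eq_g.
have : basep g \in conj_rotations h by rewrite eq_g memJ_norm.
rewrite mem_imset ?inE; last exact: basep_inj.
by case/existsP=> k /forallP; exists k.
Qed.

Lemma wreath_classes_ge m (x : 'I_m -> {perm 'I_12}) :
  (forall i, x i \in A) -> (forall i j, x i \in x j ^: A -> i = j) ->
  (m ^ r <= kcl wreath * r)%N.
Proof.
move=> xA x_inj.
pose X (w : {ffun 'I_r -> 'I_m}) := basep [ffun i => x (w i)].
have -> : (m ^ r)%N = #|{ffun 'I_r -> 'I_m}| by rewrite card_ffun !card_ord.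
rewrite /kcl; apply: (@card_le_fibers {ffun 'I_r -> 'I_m} _ (fun w => X w ^: wreath)) => w.
  by apply/mem_classes/basep_wreath => i; rewrite ffunE.
apply: leq_trans (_ : #|[set rotc k w | k : 'I_r]| <= r); last first.
  by rewrite -[r in _ <= r]card_ord leq_imset_card.
apply/subset_leq_card/subsetP => v; rewrite inE => /eqP eq_vw.
have /basep_class_rot[k vk] : X v \in X w ^: wreath by rewrite -eq_vw class_refl.
apply/imsetP; exists k => //; apply/ffunP => i; apply: x_inj.
by move: (vk i); rewrite !ffunE.
Qed.

End WreathProduct.

Lemma wreath_M12E r : wreath_M12 r = wreath M12 r.
Proof. by []. Qed.

Lemma card_ord_count n (P : pred 'I_n.+1) :
  #|[set p | P p]| = count (fun k => P (inord k)) (iota 0 n.+1).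
Proof.
rewrite cardsE cardE /enum_mem size_filter -enumT -val_enum_ord count_map.
by apply: eq_count => p /=; rewrite inord_val.
Qed.

(* MathComp's finite sets and permutations are locked and do not reduce under
   vm_compute, so the finite checks below are run on naturals: a permutation x
   of 'I_12 is shadowed by nact x, which is the identity beyond 11. *)
Definition nact (x : {perm 'I_12}) (n : nat) : nat := if n < 12 then (x (inord n) : nat) else n.

Lemma nact_ord x (p : 'I_12) : nact x p = x p.
Proof. by rewrite /nact ltn_ord inord_val. Qed.

Lemma nact1 : nact 1%g =1 id.
Proof. by move=> n; rewrite /nact; case: ifP => // n12; rewrite perm1 inordK. Qed.

Lemma nactM x y n : nact (x * y)%g n = nact y (nact x n).
Proof.
rewrite /nact; case: ifP => [n12 | -> //].
by rewrite ltn_ord permM inord_val.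
Qed.

Lemma iter_nact x k (p : 'I_12) : iter k (nact x) p = iter k x p.
Proof. by elim: k => //= k ->; rewrite nact_ord. Qed.

Definition swapn (i j n : nat) : nat := if n == i then j else if n == j then i else n.

Lemma nact_tp i j : i < 12 -> j < 12 -> nact (tp i j) =1 swapn i j.
Proof.
move=> i12 j12 n; rewrite /nact /swapn; case: ifP => n12; last first.
  by case: eqP => [ni | _]; [|case: eqP => [nj | //]]; move: n12; rewrite ?ni ?nj ?i12 ?j12.
have pt_neq k l : k < 12 -> l < 12 -> k != l -> pt k != pt l.
  by move=> k12 l12; apply: contra => /eqP/(congr1 val); rewrite /= !inordK // => ->.
rewrite /tp; case: eqP => [-> | /eqP ni]; first by rewrite tpermL inordK.
case: eqP => [-> | /eqP nj]; first by rewrite tpermR inordK.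
by rewrite tpermD ?inordK // pt_neq // eq_sym.
Qed.

Definition cyc3n (x y z : nat) : nat -> nat := swapn x y \o swapn y z.
Definition m12a_nat : nat -> nat := swapn 5 11 \o swapn 4 10 \o swapn 2 9 \o swapn 0 3.
Definition m12b_nat : nat -> nat :=
  cyc3n 5 9 6 \o cyc3n 4 11 10 \o cyc3n 1 2 3 \o cyc3n 0 7 8.

Lemma nact_m12a : nact m12a =1 m12a_nat.
Proof. by move=> n; rewrite /m12a !nactM !nact_tp. Qed.

Lemma nact_m12b : nact m12b =1 m12b_nat.
Proof. by move=> n; rewrite /m12b /cyc3 !nactM !nact_tp. Qed.

Lemma nactX x e : nact (x ^+ e)%g =1 iter e (nact x).
Proof. by elim: e => [|e IHe] n; rewrite ?expg0 ?nact1 // expgSr nactM IHe. Qed.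

Definition m12_word (es : seq nat) : {perm 'I_12} := (\prod_(e <- es) (m12a * m12b ^+ e))%g.
Definition m12_word_nat (es : seq nat) : nat -> nat :=
  foldr (fun e f => f \o iter e m12b_nat \o m12a_nat) id es.

Lemma m12_word_M12 es : m12_word es \in M12.
Proof.
have gen_M12 x : x \in [set m12a; m12b] -> x \in M12 by move=> x_gen; rewrite mem_gen.
by apply: group_prod => e _; rewrite groupM ?groupX ?gen_M12 // !inE eqxx ?orbT.
Qed.

Lemma nact_m12_word es : nact (m12_word es) =1 m12_word_nat es.
Proof.
elim: es => [|e es IHes] n; first by rewrite /m12_word big_nil nact1.
rewrite /m12_word big_cons nactM IHes (nactM m12a) nact_m12a nactX.
by rewrite (eq_iter nact_m12b).
Qed.

Definition pattern (x : {perm 'I_12}) (E : seq nat) (p : 'I_12) : {set 'I_12} :=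
  [set:: [seq iter k x p | k <- E]].

Definition pattern_count (P : pred {set 'I_12}) E x : nat :=
  #|[set p | P (pattern x E p)]|.

Lemma pattern_conj x a E p : pattern (x ^ a)%g E (a p) = a @: pattern x E p.
Proof.
have iterJ k : iter k (x ^ a)%g (a p) = a (iter k x p).
  by elim: k => //= k ->; rewrite permJ.
apply/setP => q; rewrite inE; under eq_map do rewrite iterJ.
apply/mapP/imsetP => [[k kE ->] | [_ /[!inE] /mapP[k kE ->] ->]]; last by exists k.
by exists (iter k x p); rewrite // inE; apply: map_f.
Qed.

Lemma pattern_count_conj (P : pred {set 'I_12}) (E : seq nat) (x a : {perm 'I_12}) :
  (forall S : {set 'I_12}, P (a @: S) = P S) ->
  pattern_count P E (x ^ a)%g = pattern_count P E x.
Proof.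
move=> Pa; rewrite /pattern_count -[RHS](card_imset _ (@perm_inj _ a)); apply: eq_card => q.
rewrite -[q](permKV a) mem_imset ?inE; last exact: perm_inj.
by rewrite pattern_conj Pa.
Qed.

Definition set_code (S : {set 'I_12}) : seq nat := [seq n <- iota 0 12 | inord n \in S].

Definition nat_image (f : nat -> nat) (l : seq nat) : seq nat :=
  [seq q <- iota 0 12 | has (fun n => f n == q) l].

(* The 132 hexads of the Steiner system S(5,6,12), as sorted lists: the orbit
   of one hexad under the generators, which 21 rounds of closure exhaust. *)
Definition hexads : seq (seq nat) := Eval vm_compute in
  iter 21 (fun L => undup (L ++ [seq nat_image f l | f <- [:: m12a_nat; m12b_nat], l <- L]))
    [:: [:: 0; 1; 2; 3; 4; 8]].

Definition is_hexad (S : {set 'I_12}) : bool := set_code S \in hexads.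

Lemma size_set_code S : size (set_code S) = #|S|.
Proof. by rewrite size_filter -[#|S|]cardsE card_ord_count. Qed.

Lemma set_code_imset (a : {perm 'I_12}) (S : {set 'I_12}) :
  set_code (a @: S) = nat_image (nact a) (set_code S).
Proof.
apply: eq_in_filter => q; rewrite mem_iota => /andP[_ q12].
apply/imsetP/hasP => [[p pS /(congr1 (@nat_of_ord _))] | [n]].
  rewrite inordK // => ->; exists (p : nat); rewrite ?nact_ord //.
  by rewrite /set_code mem_filter mem_iota ltn_ord inord_val pS.
rewrite /set_code mem_filter mem_iota /= => /andP[nS n12] /eqP <-.
by exists (inord n) => //; rewrite /nact n12 inord_val.
Qed.

Lemma hexads_m12_stable :
  all (fun l => (nat_image m12a_nat l \in hexads) && (nat_image m12b_nat l \in hexads)) hexads.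
Proof. by vm_compute. Qed.

Lemma eq_nat_image f g l : f =1 g -> nat_image f l = nat_image g l.
Proof. by move=> fg; apply: eq_filter => q; apply: eq_has => n /=; rewrite fg. Qed.

Lemma M12_hexads : M12 \subset 'N([set S | is_hexad S] | 'P^*)%g.
Proof.
rewrite gen_subG; apply/subsetP => a gen_a; rewrite !inE; apply/subsetP => S.
rewrite !inE /= => hexS; have -> : ('P^*)%act S a = a @: S by [].
have /andP[] := allP hexads_m12_stable _ hexS.
case/set2P: gen_a => ->; rewrite /is_hexad set_code_imset.
  by rewrite (eq_nat_image _ nact_m12a).
by rewrite (eq_nat_image _ nact_m12b).
Qed.

Lemma is_hexad_M12 a (S : {set 'I_12}) : a \in M12 -> is_hexad (a @: S) = is_hexad S.
Proof.
move=> aM; have := astabs_act S (subsetP M12_hexads a aM).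
by rewrite !inE.
Qed.

(* Fixed-point counts of x, x^2 and x^3 separate the classes of M12 except the
   two classes of elements of order 11, and the cycle types 6^2 and 4.8; the
   hexad count separates these. *)
Definition class_stat (x : {perm 'I_12}) : seq nat :=
  [:: pattern_count (fun S => #|S| == 1) [:: 0; 1] x;
      pattern_count (fun S => #|S| == 1) [:: 0; 2] x;
      pattern_count (fun S => #|S| == 1) [:: 0; 3] x;
      pattern_count is_hexad [:: 0; 2; 4; 5; 6; 9] x].

Lemma class_stat_conj x a : a \in M12 -> class_stat (x ^ a)%g = class_stat x.
Proof.
move=> aM; have card_a (S : {set 'I_12}) : (#|a @: S| == 1) = (#|S| == 1).
  by rewrite card_imset //; apply: perm_inj.
by rewrite /class_stat !pattern_count_conj; [| move=> S; exact: is_hexad_M12 | exact: card_a ..].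
Qed.

Definition nat_pattern (f : nat -> nat) (E : seq nat) (n : nat) : seq nat :=
  [seq q <- iota 0 12 | has (fun k => iter k f n == q) E].

Definition nat_pattern_count (P : pred (seq nat)) E f : nat :=
  count (fun n => P (nat_pattern f E n)) (iota 0 12).

Definition nat_class_stat (f : nat -> nat) : seq nat :=
  [:: nat_pattern_count (fun l => size l == 1) [:: 0; 1] f;
      nat_pattern_count (fun l => size l == 1) [:: 0; 2] f;
      nat_pattern_count (fun l => size l == 1) [:: 0; 3] f;
      nat_pattern_count (mem hexads) [:: 0; 2; 4; 5; 6; 9] f].

Lemma set_code_pattern x E p : set_code (pattern x E p) = nat_pattern (nact x) E p.
Proof.
apply: eq_in_filter => q; rewrite mem_iota => /andP[_ q12].
rewrite inE -has_pred1 has_map; apply: eq_has => k /=.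
by rewrite iter_nact -val_eqE /= inordK.
Qed.

Lemma pattern_count_code P Q E x :
  (forall S, P S = Q (set_code S)) -> pattern_count P E x = nat_pattern_count Q E (nact x).
Proof.
move=> PQ; rewrite /pattern_count card_ord_count; apply: eq_in_count => n.
by rewrite mem_iota => /andP[_ n12]; rewrite PQ set_code_pattern inordK.
Qed.

Lemma class_stat_nat x : class_stat x = nat_class_stat (nact x).
Proof. by congr [:: _; _; _; _]; apply: pattern_count_code => S; rewrite ?size_set_code. Qed.

Lemma eq_nat_pattern_count P E f g :
  f =1 g -> nat_pattern_count P E f = nat_pattern_count P E g.
Proof.
move=> fg; apply: eq_count => n; congr P.
by apply: eq_filter => q; apply: eq_has => k /=; rewrite (eq_iter fg).
Qed.

Lemma eq_nat_class_stat f g : f =1 g -> nat_class_stat f = nat_class_stat g.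
Proof. by move=> fg; rewrite /nat_class_stat !(eq_nat_pattern_count _ _ fg). Qed.

Definition m12_class_reps : seq (seq nat) :=
  [:: [::]; [:: 0]; [:: 1]; [:: 2]; [:: 0; 1]; [:: 1; 2]; [:: 1; 1; 2]; [:: 1; 1; 2; 2];
      [:: 1; 2; 1; 2]; [:: 1; 1; 1; 2; 2]; [:: 1; 1; 2; 1; 2; 2]; [:: 1; 1; 2; 2; 1; 2];
      [:: 1; 1; 1; 2; 1; 2; 2]; [:: 1; 1; 1; 2; 2; 1; 2]; [:: 1; 1; 2; 1; 1; 2; 1; 1; 2]].

Definition m12_rep (i : 'I_15) : {perm 'I_12} := m12_word (nth [::] m12_class_reps i).

Lemma m12_class_stats_uniq :
  uniq [seq nat_class_stat (m12_word_nat es) | es <- m12_class_reps].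
Proof. by vm_compute. Qed.

Lemma m12_rep_M12 i : m12_rep i \in M12.
Proof. exact: m12_word_M12. Qed.

Lemma m12_reps_nonconj i j : m12_rep i \in (m12_rep j ^: M12)%g -> i = j.
Proof.
case/imsetP=> a aM eq_ij.
have : class_stat (m12_rep i) = class_stat (m12_rep j) by rewrite eq_ij class_stat_conj.
rewrite !class_stat_nat !(eq_nat_class_stat (nact_m12_word _)) => eq_stat.
have lt_size (k : 'I_15) : k < size m12_class_reps := ltn_ord k.
apply/ord_inj/eqP; rewrite -(nth_uniq [::] _ _ m12_class_stats_uniq) ?size_map ?lt_size //.
by rewrite !(nth_map [::] _ _ (lt_size _)) eq_stat eqxx.
Qed.

Theorem lemma4p1 : exists r0 : nat, forall r : nat, 1 <= r -> r0 <= r ->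
  (12 ^ r) ^ 27 < (kcl (wreath_M12 r)) ^ 25.
Proof.
exists 250 => r r_gt0 r_ge; apply: pow_bound_of_count r_ge _.
by move: (wreath_classes_ge r_gt0 m12_rep_M12 m12_reps_nonconj); rewrite wreath_M12E.
Qed.
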